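(* Let $\alpha_{\mathrm{fail}},\alpha_{\mathrm{succ}},\alpha_{\mathrm{ch}}>0$ be arbitrary and $\mathrm{3RR}=\textsc{RoundRobin}(\mathrm{ALG}_{\mathrm{fail}},\mathrm{ALG}_{\mathrm{succ}},\mathrm{ALG}_{\mathrm{ch}};\alpha_{\mathrm{fail}},\alpha_{\mathrm{succ}},\alpha_{\mathrm{ch}})$, run on an SSC instance $I$. Then for every realization $x$ and every $h\in\{\mathrm{fail},\mathrm{succ},\mathrm{ch}\}$, $$\frac1{\alpha_h}\sum_{\tau=1}^{\tau_1}\mathrm{cost}^{\mathrm{3RR}}_\tau(\mathrm{ALG}_h,I)\le\frac1{\alpha_{\mathrm{ch}}}\,\mathrm{cost}(\mathrm{OPT},I).$$
   Context: An instance $I$ of Stochastic Score Classification (SSC) consists of tests $N=\{1,\dots,n\}$, costs $c_j\ge 0$, success probabilities $p_j\in(0,1)$, and integers $0=t_1<t_2<\dots<t_B<t_{B+1}=n+1$. The outcome vector $x\in\{0,1\}^N$ has independent coordinates with $\Pr[x_j=1]=p_j$ (test $j$ succeeds iff $x_j=1$, otherwise it fails). The score $f(x)$ is the unique $i\in\{1,\dots,B\}$ with $t_i\le\|x\|_1\le t_{i+1}-1$. A (possibly adaptive) strategy conducts tests one at a time, each at most once, the choice of the next test possibly depending on outcomes observed so far, and stops as soon as $f(x)$ is determined (i.e., all $x'\in\{0,1\}^N$ agreeing with $x$ on the conducted tests have $f(x')=f(x)$). $\mathrm{cost}(S,I)$ is the random total cost of the tests conducted by strategy $S$ on $I$. $\mathrm{OPT}$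 is a fixed strategy minimizing $\mathbb{E}[\mathrm{cost}(S,I)]$ over all adaptive strategies $S$. Let $\sigma_{\mathrm{fail}},\sigma_{\mathrm{succ}},\sigma_{\mathrm{ch}}$ be permutations of $N$ (ties broken arbitrarily) such that $c_{\sigma_{\mathrm{fail}}(1)}/(1-p_{\sigma_{\mathrm{fail}}(1)})\le\dots\le c_{\sigma_{\mathrm{fail}}(n)}/(1-p_{\sigma_{\mathrm{fail}}(n)})$, $c_{\sigma_{\mathrm{succ}}(1)}/p_{\sigma_{\mathrm{succ}}(1)}\le\dots\le c_{\sigma_{\mathrm{succ}}(n)}/p_{\sigma_{\mathrm{succ}}(n)}$, and $c_{\sigma_{\mathrm{ch}}(1)}\le\dots\le c_{\sigma_{\mathrm{ch}}(n)}$. $\mathrm{ALG}_{\mathrm{fail}},\mathrm{ALG}_{\mathrm{succ}},\mathrm{ALG}_{\mathrm{ch}}$ denote the orders of tests given by $\sigma_{\mathrm{fail}},\sigma_{\mathrm{succ}},\sigma_{\mathrm{ch}}$ respectively. $\textsc{RoundRobin}(\mathrm{ALG}_1,\dots,\mathrm{ALG}_k;\alpha_1,\dots,\alpha_k)$, for fixed orders $\mathrm{ALG}_h$ of $N$ and weights $\alpha_h>0$: initialize $C_h=0$ for all $h$; while $f(x)$ is not determined, for each $h$ let $\delta_h$ be the cost of the first test in the order $\mathrm{ALG}_h$ that has not yet been conducted by the scheme, choose $h^\star\in\arg\min_h (C_h+\delta_h)/\alpha_h$ (ties arbitrary), conduct that test of $\mathrm{ALG}_{h^\star}$, and set $C_{h^\star}\leftarrow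 C_{h^\star}+\delta_{h^\star}$. Each loop iteration is a step; for a round-robin algorithm $\mathrm{RR}$ and step $\tau$ (before termination), $\mathrm{cost}^{\mathrm{RR}}_\tau(\mathrm{ALG}_h,I)$ equals the cost of the test conducted in step $\tau$ if $h=h^\star$ in that step, and $0$ otherwise. For a realization $x$ with $i=f(x)$, $\tau_1$ is the smallest integer $\tau\ge 0$ such that among the tests conducted by $\mathrm{3RR}$ in steps $1,\dots,\tau$ at least $t_i$ succeeded or at least $n+1-t_{i+1}$ failed. *)

From mathcomp Require Import all_boot all_order all_algebra.
Set Implicit Arguments. Unset Strict Implicit. Unset Printing Implicit Defensive.
Import Order.TTheory GRing.Theory Num.Theory.
Local Open Scope ring_scope.

Section SSC.
Variable R : realFieldType.
Variable n : nat.

Definition real := {ffun 'I_n -> bool}.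

Definition ones (x : real) : nat := #|[set j | x j]|.

Definition prob (p : 'I_n -> R) (x : real) : R :=
  \prod_j (if x j then p j else 1 - p j).

Definition agree (D : seq 'I_n) (x x' : real) : bool :=
  [forall j, (j \in D) ==> (x' j == x j)].

Definition determinedb (t : nat -> nat) (B : nat) (x : real) (D : seq 'I_n) : bool :=
  [exists i : 'I_B.+1, (0 < i)%N &&
     [forall x' : real, agree D x x' ==> (t i <= ones x' < t i.+1)%N]].

(* Adaptive (deterministic) strategy: next test given the history of
   conducted tests with their outcomes; None = stop. *)
Definition strategy := seq ('I_n * bool) -> option 'I_n.

Fixpoint srun (t : nat -> nat) (B : nat) (S : strategy) (x : real) (fuel : nat)
  (hist : seq ('I_n * bool)) : seq ('I_n * bool) :=
  match fuel with
  | 0 => hist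
  | f.+1 =>
    if determinedb t B x (map fst hist) then hist else
    match S hist with
    | None => hist
    | Some j => srun t B S x f (rcons hist (j, x j))
    end
  end.

(* run of strategy S on realization x (at most n tests are ever possible) *)
Definition run t B (S : strategy) (x : real) := srun t B S x n [::].

Definition valid_strategy t B (S : strategy) : Prop :=
  forall x : real, uniq (map fst (run t B S x)) /\
                   determinedb t B x (map fst (run t B S x)).

Definition scost (c : 'I_n -> R) t B (S : strategy) (x : real) : R :=
  \sum_(q <- run t B S x) c q.1.

Definition ecost (c p : 'I_n -> R) t B (S : strategy) : R :=
  \sum_(x : real) prob p x * scost c t B S x.

Definition is_optimal (c p : 'I_n -> R) t B (S : strategy) : Prop :=
  valid_strategy t B S /\
  forall S', valid_strategy t B S' -> ecost c p t B S <= ecost c p t B S'.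

Variable k : nat.

Definition first_untested (s : seq 'I_n) (done : seq 'I_n) : option 'I_n :=
  ohead [seq j <- s | j \notin done].

(* A trace is a list of steps (h*, test conducted). *)
Definition rr_C (c : 'I_n -> R) (pre : seq ('I_k * 'I_n)) (h : 'I_k) : R :=
  \sum_(r <- pre | r.1 == h) c r.2.

Definition rr_step_ok (c : 'I_n -> R) t B (ords : 'I_k -> seq 'I_n)
  (alpha : 'I_k -> R) (x : real) (pre : seq ('I_k * 'I_n)) (q : 'I_k * 'I_n) : Prop :=
  let done := map snd pre in
  ~~ determinedb t B x done /\
  first_untested (ords q.1) done = Some q.2 /\
  forall (h' : 'I_k) (j' : 'I_n), first_untested (ords h') done = Some j' ->
     (rr_C c pre q.1 + c q.2) / alpha q.1 <= (rr_C c pre h' + c j') / alpha h'.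

(* tr is a complete execution of RoundRobin(ords; alpha) on realization x
   (with some arbitrary tie-breaking). *)
Definition rr_run (c : 'I_n -> R) t B (ords : 'I_k -> seq 'I_n)
  (alpha : 'I_k -> R) (x : real) (tr : seq ('I_k * 'I_n)) : Prop :=
  (forall pre q suf, tr = pre ++ q :: suf -> rr_step_ok c t B ords alpha x pre q) /\
  determinedb t B x (map snd tr).

(* cost^{RR}_tau(ALG_h, I) for step tau (1-based) summed over tau = 1..tau1 *)
Definition rr_cost_upto (c : 'I_n -> R) (tr : seq ('I_k * 'I_n)) (tau1 : nat) (h : 'I_k) : R :=
  \sum_(r <- take tau1 tr | r.1 == h) c r.2.

End SSC.

Definition tau1_prop n k (t : nat -> nat) (i : nat) (x : real n)
  (tr : seq ('I_k * 'I_n)) (tau : nat) : bool :=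
  let D := take tau (map snd tr) in
  (t i <= count (fun j => x j) D)%N || (n.+1 - t i.+1 <= count (fun j => ~~ x j) D)%N.

Definition is_tau1 n k t i (x : real n) (tr : seq ('I_k * 'I_n)) (tau1 : nat) : Prop :=
  tau1_prop t i x tr tau1 /\ forall tau, (tau < tau1)%N -> ~~ tau1_prop t i x tr tau.

(* The three algorithms indexed by 'I_3: 0 = fail, 1 = succ, 2 = ch. *)
Definition three (T : Type) (a b d : T) (h : 'I_3) : T :=
  match val h with 0 => a | 1 => b | _ => d end.

(* Fix a realization x with score i and consider a step of the round robin
   taken before tau_1, by algorithm h* = q.1 conducting test q.2 after the
   tests [pre].  The round-robin rule says that the normalized cumulative
   cost (C_{h*} + c_{q.2}) / alpha_{h*} is at most the corresponding quantity
   (C_ch + c_j) / alpha_ch for the next test j of the cheapest-first order.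
   Every test conducted so far by ALG_ch lies among the first |pre| tests of
   its order, so C_ch + c_j is at most the cost of the |pre|+1 cheapest tests.
   Since tau_1 has not been reached, fewer than t_i successes and fewer than
   n+1-t_{i+1} failures have been seen, whereas any set of tests determining
   f(x) = i contains at least that many of each; hence OPT conducts more than
   |pre| distinct tests, and pays at least the |pre|+1 cheapest costs.
   Finally the cost of ALG_h up to tau_1 is its cumulative cost at its last
   step before tau_1, which is one of the steps just bounded. *)

From mathcomp Require Import all_boot all_order all_algebra.
From mathcomp Require Import zify.
Import Order.TTheory GRing.Theory Num.Theory.
Local Open Scope ring_scope.

Section FirstUntested.
Context {n : nat}.
Implicit Types (s D : seq 'I_n) (j : 'I_n).

Lemma first_untestedP {s D j} :
  first_untested s D = Some j -> (j \in s) && (j \notin D).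
Proof.
rewrite /first_untested; case E: [seq j <- s | j \notin D] => [|a l] //= [<-].
have : a \in [seq j <- s | j \notin D] by rewrite E mem_head.
by rewrite mem_filter andbC.
Qed.

Lemma first_untested_exists {s D j} :
  j \in s -> j \notin D -> exists j', first_untested s D = Some j'.
Proof.
move=> js jD; rewrite /first_untested.
case E: [seq j <- s | j \notin D] => [|a l]; last by exists a.
have : j \in [seq j <- s | j \notin D] by rewrite mem_filter jD.
by rewrite E.
Qed.

(* All tests preceding the proposed one were conducted, so its position in a
   duplicate-free order is at most the number of conducted tests. *)
Lemma first_untested_index {s D j} :
  uniq s -> first_untested s D = Some j -> (index j s <= size D)%N.
Proof.
move=> us hj; have /andP[js _] := first_untestedP hj.
have done_before : all (mem D) (take (index j s) s).
  move: us hj js; elim: s => [|a s IH] //= /andP[_ us].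
  rewrite /first_untested /=; case: ifP => aD /=; first by move=> [->]; rewrite eqxx.
  move=> hj; have /andP[_ jD] := first_untestedP hj.
  have aj : a != j by apply: contraFneq aD => ->.
  rewrite /= (negbTE aj) inE eq_sym (negbTE aj) /= (negbFE aD); exact: IH.
have -> : index j s = size (take (index j s) s) by rewrite size_takel // index_size.
by apply: uniq_leq_size; [exact: take_uniq | exact/allP].
Qed.

Lemma first_untested_take {s D j} :
  uniq s -> first_untested s D = Some j -> j \in take (size D).+1 s.
Proof.
move=> us hj; have /andP[js _] := first_untestedP hj.
by rewrite in_take // ltnS first_untested_index.
Qed.

End FirstUntested.

Lemma mem_take_leq (T : eqType) (s : seq T) i j x :
  (i <= j)%N -> x \in take i s -> x \in take j s.
Proof. by move=> ij; rewrite -(take_takel s ij); exact: mem_take. Qed.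

Section CostSums.
Context {R : realFieldType} {n : nat} {c : 'I_n -> R}.
Hypothesis c_ge0 : forall j, 0 <= c j.

Lemma sum_le_subset (U V : seq 'I_n) : uniq U -> uniq V -> {subset U <= V} ->
  \sum_(j <- U) c j <= \sum_(j <- V) c j.
Proof.
move=> uU uV sUV; rewrite [leRHS](bigID (mem U)) /=.
have -> : \sum_(j <- V | j \in U) c j = \sum_(j <- U) c j.
  rewrite -big_filter; apply/perm_big/uniq_perm => //; first exact: filter_uniq.
  by move=> y; rewrite mem_filter andb_idr //; exact: sUV.
by rewrite lerDl sumr_ge0.
Qed.

Lemma sum_take_le (s : seq 'I_n) m : \sum_(j <- take m s) c j <= \sum_(j <- s) c j.
Proof. by rewrite -{2}(cat_take_drop m s) big_cat /= lerDl sumr_ge0. Qed.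

Lemma sorted_take_le_subseq (s u : seq 'I_n) : sorted (fun a b => c a <= c b) s ->
  subseq u s -> \sum_(j <- take (size u) s) c j <= \sum_(j <- u) c j.
Proof.
elim: s u => [|a s IH] [|b u] //=; try by rewrite ?take0 !big_nil.
move=> hs; rewrite !big_cons.
have ss := path_sorted hs.
case: eqP => [-> hsub|_ hsub]; first by rewrite lerD2l IH.
apply: lerD; last by apply: IH => //; exact: subseq_trans (subseq_cons u b) hsub.
have cost_trans : transitive (fun a b : 'I_n => c a <= c b) by move=> ???; apply: le_trans.
by move/allP: (order_path_min cost_trans hs); apply; apply: (mem_subseq hsub); rewrite mem_head.
Qed.

Lemma sorted_take_le (s D : seq 'I_n) m :
  sorted (fun a b => c a <= c b) s -> uniq s -> (forall j, j \in s) ->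
  uniq D -> (m <= size D)%N ->
  \sum_(j <- take m s) c j <= \sum_(j <- D) c j.
Proof.
move=> ss us alls uD hm; set u := [seq j <- s | j \in D].
have pu : perm_eq u D.
  by apply: uniq_perm => // [|y]; [exact: filter_uniq | rewrite mem_filter alls andbT].
rewrite -(perm_big _ pu) -(take_takel s hm) -(perm_size pu).
apply: le_trans (sum_take_le _ _) _.
exact: sorted_take_le_subseq ss (filter_subseq _ _).
Qed.

End CostSums.

Section Scores.
Context {n B : nat} {t : nat -> nat}.
Hypothesis t_incr : forall i, (1 <= i <= B)%N -> (t i < t i.+1)%N.

Lemma t_mono a b : (1 <= a)%N -> (a <= b <= B.+1)%N -> (t a <= t b)%N.
Proof.
move=> a1 /andP[ab]; rewrite -(subnKC ab); elim: (b - a)%N => [|d IH] hd.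
  by rewrite addn0.
by rewrite addnS; apply: leq_trans (IH _) (ltnW (t_incr _ _)); lia.
Qed.

Lemma score_unique {i i' m} : (1 <= i <= B)%N -> (1 <= i' <= B)%N ->
  (t i <= m < t i.+1)%N -> (t i' <= m < t i'.+1)%N -> i = i'.
Proof.
move=> hi hi' hm hm'; case: (ltngtP i i') => // ii'.
- by have := @t_mono i.+1 i' ltac:(lia) ltac:(lia); lia.
- by have := @t_mono i'.+1 i ltac:(lia) ltac:(lia); lia.
Qed.

Lemma card_mem_filter (D : seq 'I_n) (P : pred 'I_n) :
  uniq D -> #|[set j | (j \in D) && P j]| = count P D.
Proof.
move=> uD; rewrite -size_filter -(card_uniqP _) ?filter_uniq //.
by apply: eq_card => y; rewrite inE mem_filter andbC.
Qed.

(* A duplicate-free set of tests determining the score i of x contains at least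
   t_i successes and n+1-t_{i+1} failures: otherwise completing its outcomes by
   all failures (resp. all successes) would give a realization of another score. *)
Lemma determined_counts {x : real n} {i} {D : seq 'I_n} :
  (1 <= i <= B)%N -> (t i <= ones x < t i.+1)%N ->
  uniq D -> determinedb t B x D ->
  (t i <= count (fun j => x j) D /\ n.+1 - t i.+1 <= count (fun j => ~~ x j) D)%N.
Proof.
move=> hi hx uD /existsP[i' /andP[i'0 /forallP band]].
have agreeP (y : real n) : (forall j, j \in D -> y j = x j) -> agree D x y.
  by move=> E; apply/forallP => j; apply/implyP => /E ->.
have := band x; rewrite agreeP // => /andP[xl xr].
have i'B : (1 <= i' <= B)%N by rewrite i'0 -ltnS ltn_ord.
have ii' := score_unique hi i'B hx (introT andP (conj xl xr)); subst i.
pose xlow : real n := [ffun j => (j \in D) && x j].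
pose xhigh : real n := [ffun j => (j \notin D) || x j].
have := band xlow; rewrite agreeP => [/andP[low _]|j jD]; last by rewrite ffunE jD.
have := band xhigh; rewrite agreeP => [/andP[_ high]|j jD]; last by rewrite ffunE jD.
have ones_low : ones xlow = count (fun j => x j) D.
  by rewrite -card_mem_filter //; apply: eq_card => y; rewrite !inE ffunE.
have ones_high : (ones xhigh + count (fun j => ~~ x j) D = n)%N.
  have -> : ones xhigh = #|~: [set j | (j \in D) && ~~ x j]|.
    by apply: eq_card => y; rewrite !inE ffunE negb_and negbK.
  by rewrite -card_mem_filter // addnC cardsC card_ord.
by split; lia.
Qed.

End Scores.

Section RoundRobinTrace.
Context {R : realFieldType} {n B k : nat} {c : 'I_n -> R} {t : nat -> nat}.
Context {ords : 'I_k -> seq 'I_n} {alpha : 'I_k -> R} {x : real n}.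
Context {tr : seq ('I_k * 'I_n)}.
Hypothesis htr : rr_run c t B ords alpha x tr.

Lemma trace_uniq {pre suf} : tr = pre ++ suf -> uniq (map snd pre).
Proof.
elim/last_ind: pre suf => [|pre q IH] suf // E; rewrite cat_rcons in E.
have [_ [fq _]] := htr.1 _ _ _ E; have /andP[_ fresh] := first_untestedP fq.
by rewrite map_rcons rcons_uniq fresh (IH (q :: suf)).
Qed.

Lemma trace_mem_take {pre suf r} : tr = pre ++ suf -> r \in pre ->
  uniq (ords r.1) -> r.2 \in take (size pre) (ords r.1).
Proof.
move=> E rp us; case/splitPr: rp E => p1 p2 E; rewrite -catA cat_cons in E.
have [_ [fq _]] := htr.1 _ _ _ E.
apply: mem_take_leq (first_untested_take us fq).
by rewrite size_map size_cat /= addnS ltnS leq_addr.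
Qed.

Lemma rr_C_next_le {pre suf h j} : (forall j, 0 <= c j) -> tr = pre ++ suf ->
  uniq (ords h) -> first_untested (ords h) (map snd pre) = Some j ->
  rr_C c pre h + c j <= \sum_(j <- take (size pre).+1 (ords h)) c j.
Proof.
move=> c_ge0 E us fj.
set P := fun r : 'I_k * 'I_n => r.1 == h.
have sub : subseq (map snd (filter P pre)) (map snd pre).
  exact/map_subseq/filter_subseq.
have /andP[_ fresh] := first_untestedP fj.
rewrite (_ : _ + _ = \sum_(j <- j :: map snd (filter P pre)) c j); last first.
  by rewrite big_cons big_map big_filter addrC.
apply: sum_le_subset => //; last 1 first.
- move=> y; rewrite inE => /orP[/eqP ->|].
    by have := first_untested_take us fj; rewrite size_map.
  case/mapP => r; rewrite mem_filter => /andP[/eqP r1 rp] ->; rewrite -r1 in us *.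
  exact: mem_take_leq (leqnSn _) (trace_mem_take E rp us).
- rewrite /= (subseq_uniq sub (trace_uniq E)) andbT.
  by apply: contra fresh; exact: mem_subseq.
- exact: take_uniq.
Qed.

End RoundRobinTrace.

(* The cost charged to ALG_h during the first m steps is its cumulative cost
   after its last step among them; hence a bound on all these normalized
   cumulative costs bounds the normalized cost of ALG_h up to step m. *)
Lemma rr_cost_upto_le (R : realFieldType) n k (c : 'I_n -> R) (alpha : 'I_k -> R)
  (tr : seq ('I_k * 'I_n)) m (M : R) (h : 'I_k) : 0 <= M ->
  (forall pre q suf, tr = pre ++ q :: suf -> (size pre < m)%N ->
     (alpha q.1)^-1 * (rr_C c pre q.1 + c q.2) <= M) ->
  (alpha h)^-1 * rr_cost_upto c tr m h <= M.
Proof.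
move=> M_ge0 step.
suff H P suf : take m tr = P ++ suf -> (alpha h)^-1 * \sum_(r <- P | r.1 == h) c r.2 <= M.
  by apply: (H _ [::]); rewrite cats0.
elim/last_ind: P suf => [|P q IH] suf E; first by rewrite big_nil mulr0.
rewrite big_rcons /=; case: eqP => [qh|_]; last first.
  by rewrite addr0; apply: (IH (q :: suf)); rewrite E cat_rcons.
have E' : tr = P ++ q :: (suf ++ drop m tr).
  by rewrite -[LHS](cat_take_drop m) E cat_rcons -catA.
rewrite -qh; apply: step E' _.
by have := size_take_min m tr; rewrite E size_cat size_rcons; lia.
Qed.

Section StepBound.
Context {R : realFieldType} {n B k : nat} {c : 'I_n -> R} {t : nat -> nat}.
Hypothesis c_ge0 : forall j, 0 <= c j.
Hypothesis t_incr : forall i, (1 <= i <= B)%N -> (t i < t i.+1)%N.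
Context {x : real n} {i : nat}.
Hypotheses (hi : (1 <= i <= B)%N) (hx : (t i <= ones x < t i.+1)%N).
Context {tr : seq ('I_k * 'I_n)} {tau1 : nat}.
Hypothesis htau1 : is_tau1 t i x tr tau1.

Lemma before_tau1_size_lt pre suf (D : seq 'I_n) :
  tr = pre ++ suf -> (size pre < tau1)%N -> uniq D -> determinedb t B x D ->
  (size pre < size D)%N.
Proof.
move=> E hs uD det.
have := htau1.2 _ hs; rewrite /tau1_prop E map_cat take_size_cat ?size_map //.
rewrite negb_or -!ltnNge => /andP[few_succ few_fail].
have [many_succ many_fail] := determined_counts t_incr hi hx uD det.
have split_D : (count (fun j => x j) D + count (fun j => ~~ x j) D = size D)%N.
  exact: count_predC.
have split_pre : (count (fun j => x j) (map snd pre)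
                  + count (fun j => ~~ x j) (map snd pre) = size pre)%N.
  by rewrite -(size_map snd); exact: count_predC.
lia.
Qed.

Context {ords : 'I_k -> seq 'I_n} {alpha : 'I_k -> R}.
Hypothesis htr : rr_run c t B ords alpha x tr.
Context {h0 : 'I_k}.
Hypotheses (h0_perm : perm_eq (ords h0) (enum 'I_n))
           (h0_sorted : sorted (fun a b => c a <= c b) (ords h0))
           (h0_pos : 0 < alpha h0).
Context {OPT : strategy n}.
Hypothesis OPT_valid : valid_strategy t B OPT.

Lemma rr_step_bound pre q suf : tr = pre ++ q :: suf -> (size pre < tau1)%N ->
  (alpha q.1)^-1 * (rr_C c pre q.1 + c q.2) <= (alpha h0)^-1 * scost c t B OPT x.
Proof.
move=> E hs.
have us : uniq (ords h0) by rewrite (perm_uniq h0_perm) enum_uniq.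
have alls j : j \in ords h0 by rewrite (perm_mem h0_perm) mem_enum.
have [_ [fq rr_rule]] := htr.1 _ _ _ E.
have /andP[_ fresh] := first_untestedP fq.
have [j' fj'] := first_untested_exists (alls q.2) fresh.
have chosen_le := rr_rule h0 j' fj'.
have next_le := rr_C_next_le htr c_ge0 E us fj'.
have [OPT_uniq OPT_det] := OPT_valid x.
have prefix_le : \sum_(j <- take (size pre).+1 (ords h0)) c j <= scost c t B OPT x.
  rewrite /scost -(big_map fst xpredT c).
  apply: sorted_take_le => //.
  exact: before_tau1_size_lt E hs OPT_uniq OPT_det.
rewrite mulrC [_^-1 * _]mulrC; apply: le_trans chosen_le _.
by apply: ler_wpM2r; [rewrite invr_ge0 ltW | exact: le_trans next_le prefix_le].
Qed.

End StepBound.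

Theorem lemma2 (R : realFieldType) (n B : nat) (c p : 'I_n -> R) (t : nat -> nat)
  (hc : forall j, 0 <= c j) (hp : forall j, 0 < p j < 1)
  (hB : (1 <= B)%N) (ht1 : t 1%N = 0%N) (htB : t B.+1 = n.+1)
  (ht : forall i, (1 <= i <= B)%N -> (t i < t i.+1)%N)
  (sfail ssucc sch : seq 'I_n)
  (hsfail : perm_eq sfail (enum 'I_n))
  (hsfail' : sorted (fun a b => c a / (1 - p a) <= c b / (1 - p b)) sfail)
  (hssucc : perm_eq ssucc (enum 'I_n))
  (hssucc' : sorted (fun a b => c a / p a <= c b / p b) ssucc)
  (hsch : perm_eq sch (enum 'I_n))
  (hsch' : sorted (fun a b => c a <= c b) sch)
  (afail asucc ach : R) (hafail : 0 < afail) (hasucc : 0 < asucc) (hach : 0 < ach)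
  (OPT : strategy n) (hOPT : is_optimal c p t B OPT)
  (x : real n) (i : nat) (hi : (1 <= i <= B)%N) (hx : (t i <= ones x < t i.+1)%N)
  (tr : seq ('I_3 * 'I_n))
  (htr : rr_run c t B (three sfail ssucc sch) (three afail asucc ach) x tr)
  (tau1 : nat) (htau1 : is_tau1 t i x tr tau1)
  (h : 'I_3) :
  (three afail asucc ach h)^-1 * rr_cost_upto c tr tau1 h
    <= ach^-1 * scost c t B OPT x.
Proof.
(* ALG_ch is the order with index [ord_max], the cheapest-first one. *)
apply: rr_cost_upto_le.
  by apply: mulr_ge0; [rewrite invr_ge0 ltW | apply: sumr_ge0].
exact: (rr_step_bound hc ht hi hx htau1 htr (h0 := ord_max) hsch hsch' hach hOPT.1).
Qed.
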